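(* Under the same setting over $\mathbb{F}_2$ (leader set $\mathcal L$ with $|\mathcal L|=\mathrm{rank}_2(\mathbb{D}_{\mathcal L})=\mathrm{rank}_2(\mathbb{D})$, $\mathcal A\subseteq[{\mathsf K}]\setminus\mathcal L$ with $|\mathcal A|=t+1$, $\mathcal B=\mathcal L\cup\mathcal A$), for every choice of the subfiles $F_{i,\mathcal W}$, $$\bigoplus_{\mathcal V\in\mathscr V_{\mathcal B}}W_{\mathcal B\setminus\mathcal V}=0,\qquad\text{and consequently}\qquad W_{\mathcal A}=\bigoplus_{\mathcal V\in\mathscr V_{\mathcal B},\ \mathcal V\neq\mathcal L}W_{\mathcal B\setminus\mathcal V},$$ where every message on the right-hand side satisfies $(\mathcal B\setminus\mathcal V)\cap\mathcal L\neq\emptyset$.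
   Context: $\mathbb{D}\in\mathbb{F}_2^{{\mathsf K}\times{\mathsf N}}$ has rows $\mathbf y_k=(y_{k,1},\ldots,y_{k,{\mathsf N}})$; $\mathbb{D}_{\mathcal S}$ is the submatrix of rows indexed by $\mathcal S$; $t\in\{0,\ldots,{\mathsf K}-1\}$. Subfiles $F_{i,\mathcal W}$ ($i\in[{\mathsf N}]$, $\mathcal W\subseteq[{\mathsf K}]$, $|\mathcal W|=t$) are vectors over $\mathbb{F}_2$ of a common length. Blocks $B_{k,\mathcal W}=\sum_{n}y_{k,n}F_{n,\mathcal W}$. For $|\mathcal S|=t+1$, $W_{\mathcal S}=\bigoplus_{k\in\mathcal S}B_{k,\mathcal S\setminus\{k\}}$. $\mathscr V_{\mathcal B}$ is the family of subsets $\mathcal V\subseteq\mathcal B$ with $|\mathcal V|=|\mathcal L|$ and $\mathrm{rank}_2(\mathbb{D}_{\mathcal V})=|\mathcal L|$ (so $\mathcal L\in\mathscr V_{\mathcal B}$ and $W_{\mathcal B\setminus\mathcal L}=W_{\mathcal A}$). *)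

From HB Require Import structures.
From mathcomp Require Import all_boot all_order all_algebra.
Set Implicit Arguments. Unset Strict Implicit. Unset Printing Implicit Defensive.
Import GRing.Theory.
Local Open Scope ring_scope.

Definition subrows (K N : nat) (D : 'M['F_2]_(K, N)) (S : {set 'I_K}) :
  'M['F_2]_(#|S|, N) :=
  rowsub (fun i : 'I_#|S| => enum_val i) D.

Definition block (K N len : nat) (D : 'M['F_2]_(K, N))
  (F : 'I_N -> {set 'I_K} -> 'rV['F_2]_len) (k : 'I_K) (W : {set 'I_K}) :
  'rV['F_2]_len :=
  \sum_(n < N) D k n *: F n W.

Definition msg (K N len : nat) (D : 'M['F_2]_(K, N))
  (F : 'I_N -> {set 'I_K} -> 'rV['F_2]_len) (S : {set 'I_K}) :
  'rV['F_2]_len :=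
  \sum_(k in S) block D F k (S :\ k).

Definition inVB (K N : nat) (D : 'M['F_2]_(K, N)) (L B V : {set 'I_K}) : bool :=
  [&& V \subset B, #|V| == #|L| & \rank (subrows D V) == #|L|].

From HB Require Import structures.
From mathcomp Require Import all_boot all_order all_algebra.
Import GRing.Theory.
Local Open Scope ring_scope.

(* Over F_2 a linear dependency among rows of D is just a nonempty set of rows
   summing to 0. Writing U := V ∪ {k}, the sum of the messages W_{B\V} over
   V ∈ 𝒱_B regroups, for each U ⊆ B, into blocks B_{k,B\U} summed over those
   k ∈ U for which U\{k} indexes a basis of the row space of D; it is enough
   that the corresponding rows of D sum to 0. Since rank D = |L| < |U|, the
   rows indexed by U have a nonempty zero-sum subset T. If some U\{k0} is
   free, every such T contains k0, so T is unique (the symmetric difference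
   of two of them is a zero-sum subset of U\{k0}), and U\{k} is free exactly
   when k ∈ T. The second identity moves the term V = L, i.e. W_A, to the
   other side; the third is a cardinality argument. *)

Lemma F2_addxx (V : lmodType 'F_2) (x : V) : x + x = 0.
Proof.
have two0 : 1 + 1 = 0 :> 'F_2 by apply/val_inj.
by rewrite -[x]scale1r -scalerDl two0 scale0r.
Qed.

Lemma F2_oppr (V : lmodType 'F_2) (x : V) : - x = x.
Proof. by apply/eqP; rewrite eq_sym -addr_eq0 F2_addxx. Qed.

Lemma F2_cases (a : 'F_2) : a = 0 \/ a = 1.
Proof. by case: a => [[|[|m]]] //= ?; [left | right]; apply/val_inj. Qed.

Lemma big_setSymD_F2 {I : finType} {V : lmodType 'F_2} (T1 T2 : {set I})
    (f : I -> V) :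
  \sum_(i in T1) f i + \sum_(i in T2) f i
    = \sum_(i in (T1 :\: T2) :|: (T2 :\: T1)) f i.
Proof.
rewrite !(big_mkcond (fun i => i \in _)) -big_split; apply: eq_bigr => i _.
rewrite !inE; case: (i \in T1); case: (i \in T2) => /=;
  by rewrite ?F2_addxx ?addr0 ?add0r.
Qed.

Section RowSums.
Variables (K N : nat) (D : 'M['F_2]_(K, N)).

Lemma mul_subrows (S : {set 'I_K}) (v : 'rV_#|S|) :
  v *m subrows D S
    = \sum_(k in [set enum_val i | i in [set i | v 0 i != 0]]) row k D.
Proof.
rewrite big_imset /=; last by move=> i j _ _; apply: enum_val_inj.
rewrite mulmx_sum_row [RHS]big_mkcond /=; apply: eq_bigr => i _.
rewrite /subrows row_rowsub inE.
by case: (F2_cases (v 0 i)) => ->; rewrite ?scale0r ?scale1r.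
Qed.

Lemma row_free_subrowsP (S : {set 'I_K}) :
  reflect (forall T : {set 'I_K},
             T \subset S -> \sum_(k in T) row k D = 0 -> T = set0)
          (row_free (subrows D S)).
Proof.
apply: (iffP idP) => [free T TS sumT | noT].
  pose v := \row_(i < #|S|) ((enum_val i \in T)%:R : 'F_2).
  have imT : [set enum_val i | i in [set i | v 0 i != 0]] = T.
    apply/setP => k; apply/imsetP/idP => [[i] | kT].
      by rewrite inE mxE => + ->; case: (enum_val i \in T); rewrite ?eqxx.
    have kS := subsetP TS k kT.
    by exists (enum_rank_in kS k); rewrite ?inE ?mxE enum_rankK_in ?kT.
  have v0 : v = 0 by apply: (row_free_inj free); rewrite mul0mx mul_subrows imT.
  rewrite -imT v0; apply/eqP; rewrite imset_eq0; apply/eqP/setP => i.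
  by rewrite !inE mxE.
apply/inj_row_free => v; rewrite mul_subrows => /noT sum0.
have /eqP : [set enum_val i | i in [set i | v 0 i != 0]] = set0.
  by apply: sum0; apply/subsetP => _ /imsetP[i _ ->]; apply: enum_valP.
rewrite imset_eq0 => /eqP supp0; apply/rowP => i; rewrite mxE.
by apply/eqP/negPn/negP => vi; have := in_set0 i; rewrite -supp0 inE vi.
Qed.

Lemma subrows_dependent (S : {set 'I_K}) :
  ~~ row_free (subrows D S) ->
  exists T : {set 'I_K},
    [/\ T \subset S, T != set0 & \sum_(k in T) row k D = 0].
Proof.
have [/existsP[T /and3P[TS T0 /eqP sumT]] _ | /existsPn noT] :=
  boolP [exists T : {set 'I_K},
           [&& T \subset S, T != set0 & \sum_(k in T) row k D == 0]].
  by exists T.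
case/negP; apply/row_free_subrowsP => T TS sumT; apply/eqP.
by have := noT T; rewrite TS sumT eqxx andbT negbK.
Qed.

Section UniqueDependency.
Context {U : {set 'I_K}} {k0 : 'I_K}.
Hypothesis free0 : row_free (subrows D (U :\ k0)).

Lemma zero_sum_mem {T : {set 'I_K}} :
  T \subset U -> T != set0 -> \sum_(k in T) row k D = 0 -> k0 \in T.
Proof.
move=> TU + sumT; apply: contraTT => k0T; apply/negPn/eqP.
apply: (row_free_subrowsP _ free0) sumT; apply/subsetP => k kT.
by rewrite in_setD1 (subsetP TU) ?andbT //; apply: contraNneq k0T => <-.
Qed.

Lemma zero_sum_uniq {T1 T2 : {set 'I_K}} :
  T1 \subset U -> T1 != set0 -> \sum_(k in T1) row k D = 0 ->
  T2 \subset U -> T2 != set0 -> \sum_(k in T2) row k D = 0 ->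
  T1 = T2.
Proof.
move=> T1U T1n0 sum1 T2U T2n0 sum2.
have symD0 : (T1 :\: T2) :|: (T2 :\: T1) = set0.
  apply: (row_free_subrowsP _ free0); last first.
    by rewrite -big_setSymD_F2 sum1 sum2 addr0.
  apply/subsetP => k; rewrite !inE => /orP[]/andP[kn kin];
    rewrite ?(subsetP T1U k kin) ?(subsetP T2U k kin) andbT;
    by apply: contraNneq kn => ->; apply: zero_sum_mem.
by apply/eqP; rewrite eqEsubset -!setD_eq0 -setU_eq0 symD0.
Qed.

Lemma row_free_deletionE {T : {set 'I_K}} {k : 'I_K} :
  T \subset U -> T != set0 -> \sum_(j in T) row j D = 0 -> k \in U ->
  row_free (subrows D (U :\ k)) = (k \in T).
Proof.
move=> TU Tn0 sumT kU; apply/idP/idP => [freek | kT].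
  apply: contraTT Tn0 => kT; apply/negPn/eqP.
  apply: (row_free_subrowsP _ freek) sumT; apply/subsetP => j jT.
  by rewrite in_setD1 (subsetP TU) // andbT; apply: contraNneq kT => <-.
apply/row_free_subrowsP => T' T'Uk sumT'; apply/eqP.
have T'U : T' \subset U := subset_trans T'Uk (subD1set U k).
apply: contraTT kT => T'n0.
rewrite -(zero_sum_uniq T'U T'n0 sumT' TU Tn0 sumT).
by apply: contraTN isT => /(subsetP T'Uk); rewrite setD11.
Qed.

End UniqueDependency.

Lemma sum_rows_free_deletions (U : {set 'I_K}) : (\rank D < #|U|)%N ->
  \sum_(k in U | row_free (subrows D (U :\ k))) row k D = 0.
Proof.
move=> rkU.
have [/exists_inP[k0 _ free0] | /exists_inPn none] :=
  boolP [exists k in U, row_free (subrows D (U :\ k))]; last first.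
  by rewrite big_pred0 // => k; case: (boolP (k \in U)) => // /none /negbTE.
have : ~~ row_free (subrows D U).
  apply: contraTN rkU => /eqP <-; rewrite -leqNgt /subrows rowsubE.
  exact: mxrankM_maxr.
case/subrows_dependent => T [TU Tn0 sumT].
rewrite -[RHS]sumT; apply: eq_bigl => k.
case: (boolP (k \in U)) => kU.
  by rewrite /= (row_free_deletionE free0 TU Tn0 sumT kU).
by apply/esym/negbTE; apply: contraNN kU => /(subsetP TU).
Qed.

End RowSums.

Lemma sum_over_deletions {I : finType} {X : nmodType} (g : I -> {set I} -> X)
    (P : pred {set I}) (B : {set I}) :
  \sum_(V : {set I} | (V \subset B) && P V)
      \sum_(k in B :\: V) g k (B :\: V :\ k)
    = \sum_(U : {set I} | U \subset B) \sum_(k in U | P (U :\ k)) g k (B :\: U).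
Proof.
under eq_bigr do rewrite big_mkcond.
under [RHS]eq_bigr do rewrite big_mkcond.
rewrite exchange_big [RHS]exchange_big; apply: eq_bigr => k _ /=.
rewrite -big_mkcondr -big_mkcondr.
rewrite (reindex_onto (fun U => U :\ k) (fun V => k |: V)) /=; last first.
  by move=> V /andP[_]; rewrite inE => /andP[kV _]; apply: setU1K.
apply: eq_big => U; last first.
  by move=> /andP[_ /eqP kUk]; rewrite setDDl setUC kUk.
case kU: (k \in U); last first.
  rewrite andbF; apply/negbTE; apply: contraFN kU => /andP[_ /eqP <-].
  exact: setU11.
have UB : (U \subset B) = (U :\ k \subset B) && (k \in B).
  by rewrite -{1}(setD1K kU) subUset sub1set andbC.
by rewrite setD1K // UB !inE !eqxx andbT andbAC.
Qed.

Section Messages.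
Variables (K N len : nat) (D : 'M['F_2]_(K, N)).
Variable F : 'I_N -> {set 'I_K} -> 'rV['F_2]_len.

Lemma sum_block_eq0 (P : pred 'I_K) (W : {set 'I_K}) :
  \sum_(k | P k) row k D = 0 -> \sum_(k | P k) block D F k W = 0.
Proof.
move=> sum0; rewrite /block exchange_big /=; apply: big1 => n _.
rewrite -scaler_suml; have /rowP/(_ n) := sum0; rewrite summxE mxE.
by under eq_bigr do rewrite mxE; move=> ->; rewrite scale0r.
Qed.

Lemma sum_rows_basis_deletions (U : {set 'I_K}) :
  \sum_(k in U | (#|U :\ k| == \rank D)
                  && (\rank (subrows D (U :\ k)) == \rank D))
    row k D = 0.
Proof.
have [/eqP cardU | cardU] := boolP (#|U| == (\rank D).+1).
  rewrite -[RHS](@sum_rows_free_deletions _ _ D U) ?cardU //.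
  apply: eq_bigl => k.
  case: (boolP (k \in U)) => //= kU.
  have cardUk : #|U :\ k| = \rank D.
    by move: cardU; rewrite (cardsD1 k) kU => -[].
  by rewrite /row_free -cardUk eqxx.
rewrite big_pred0 // => k; case: (boolP (k \in U)) => //= kU.
by apply: contraNF cardU => /andP[/eqP <- _]; rewrite (cardsD1 k) kU.
Qed.

Lemma sum_msg_complements_eq0 (L B : {set 'I_K}) : #|L| = \rank D ->
  \sum_(V : {set 'I_K} | inVB D L B V) msg D F (B :\: V) = 0.
Proof.
move=> cardL; rewrite /inVB /msg (sum_over_deletions (block D F)).
apply: big1 => U _; apply: sum_block_eq0.
by rewrite cardL; apply: sum_rows_basis_deletions.
Qed.

End Messages.

Lemma setDI_neq0_card (T : finType) (B V L : {set T}) :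
  L \subset B -> #|V| = #|L| -> V != L -> (B :\: V) :&: L != set0.
Proof.
move=> LB cardV; apply: contraNneq => disj.
rewrite eq_sym eqEcard cardV leqnn andbT; apply/subsetP => l lL.
apply/negPn/negP => lV.
have : l \in (B :\: V) :&: L by rewrite !inE lV lL (subsetP LB).
by rewrite disj inE.
Qed.

Theorem mainTheorem6 (K N len t : nat) (D : 'M['F_2]_(K, N))
  (L A : {set 'I_K})
  (ht : (t < K)%N)
  (hL1 : #|L| = \rank (subrows D L))
  (hL2 : \rank (subrows D L) = \rank D)
  (hA1 : [disjoint A & L])
  (hA2 : #|A| = t.+1)
  (F : 'I_N -> {set 'I_K} -> 'rV['F_2]_len) :
  let B := L :|: A in
  [/\ \sum_(V : {set 'I_K} | inVB D L B V) msg D F (B :\: V) = 0,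
      msg D F A = \sum_(V : {set 'I_K} | inVB D L B V && (V != L)) msg D F (B :\: V)
    & forall V : {set 'I_K}, inVB D L B V -> V != L -> (B :\: V) :&: L != set0].
Proof.
move=> B.
have sum0 := @sum_msg_complements_eq0 _ _ _ D F L B (etrans hL1 hL2).
have LB : L \subset B by apply: subsetUl.
have inL : inVB D L B L by rewrite /inVB LB eqxx -hL1 eqxx.
have BL : B :\: L = A by rewrite setDUl setDv set0U; apply/setDidPl.
split=> //.
  move: sum0; rewrite (bigD1 L) //= BL => /eqP.
  by rewrite addr_eq0 F2_oppr => /eqP.
by move=> V /and3P[_ /eqP cardV _]; apply: setDI_neq0_card.
Qed.
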